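(* Let $H$ be a separable infinite-dimensional Hilbert space and let $\mathcal{T}\subseteq B_1$. Suppose there exist an orthonormal basis $\{e_n\}_{n\in\mathbb{N}}$ of $H$ and $K\in\mathbb{N}\cup\{0\}$ such that for every $N\in\mathbb{N}$, every $T\in\mathcal{T}$ and every $h$ in the closed linear span of $\{e_{N+K},e_{N+K+1},\dots\}$, the vector $Th$ is orthogonal to $\mathrm{span}\{e_1,\dots,e_N\}$. Then $\mathcal{T}$ is UEC on $H_1$.
   Context: $H_1$ is the closed unit ball of $H$ and $B_1$ the closed unit ball of $B(H)$. $H_1$ carries the weak uniformity, i.e. the one induced by the metric $\rho(x,y)=\sum_{i\ge1}2^{-i}|\langle x-y,h_i\rangle|$ for a dense sequence $(h_i)$ in $H_1$. A family $\mathcal{F}$ of maps $H_1\to H_1$ is uniformly equicontinuous (UEC) if for every $\epsilon>0$ there is $\delta>0$ such that $\rho(x,y)<\delta$ implies $\rho(f(x),f(y))<\epsilon$ for all $f\in\mathcal{F}$ and $x,y\in H_1$. *)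

From Stdlib Require Import Reals List ClassicalEpsilon.
Open Scope R_scope.

Record C : Type := mkC { Re : R; Im : R }.
Definition C0 : C := mkC 0 0.
Definition C1 : C := mkC 1 0.
Definition Cadd (a b : C) : C := mkC (Re a + Re b) (Im a + Im b).
Definition Cmul (a b : C) : C :=
  mkC (Re a * Re b - Im a * Im b) (Re a * Im b + Im a * Re b).
Definition Cconj (a : C) : C := mkC (Re a) (- Im a).
Definition Cmod (a : C) : R := sqrt (Re a * Re a + Im a * Im a).

Record Hilbert : Type := {
  carrier :> Type;
  vadd : carrier -> carrier -> carrier;
  vzero : carrier;
  vopp : carrier -> carrier;
  vscal : C -> carrier -> carrier;
  inner : carrier -> carrier -> C;
  vadd_assoc : forall x y z, vadd x (vadd y z) = vadd (vadd x y) z;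
  vadd_comm : forall x y, vadd x y = vadd y x;
  vadd_0 : forall x, vadd x vzero = x;
  vadd_opp : forall x, vadd x (vopp x) = vzero;
  vscal_1 : forall x, vscal C1 x = x;
  vscal_mul : forall a b x, vscal a (vscal b x) = vscal (Cmul a b) x;
  vscal_dist_v : forall a x y, vscal a (vadd x y) = vadd (vscal a x) (vscal a y);
  vscal_dist_s : forall a b x, vscal (Cadd a b) x = vadd (vscal a x) (vscal b x);
  inner_add_l : forall x y z, inner (vadd x y) z = Cadd (inner x z) (inner y z);
  inner_scal_l : forall a x z, inner (vscal a x) z = Cmul a (inner x z);
  inner_conj : forall x y, inner y x = Cconj (inner x y);
  inner_pos : forall x, 0 <= Re (inner x x);
  inner_def : forall x, Re (inner x x) = 0 -> x = vzero;
  complete : forall u : nat -> carrier,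
    (forall eps, eps > 0 -> exists N, forall n m, (n >= N)%nat -> (m >= N)%nat ->
        sqrt (Re (inner (vadd (u n) (vopp (u m))) (vadd (u n) (vopp (u m))))) < eps) ->
    exists l, forall eps, eps > 0 -> exists N, forall n, (n >= N)%nat ->
        sqrt (Re (inner (vadd (u n) (vopp l)) (vadd (u n) (vopp l)))) < eps
}.

Arguments vadd {h}. Arguments vzero {h}. Arguments vopp {h}.
Arguments vscal {h}. Arguments inner {h}.

Section HilbertDefs.
Context {H : Hilbert}.

Definition vsub (x y : H) : H := vadd x (vopp y).
Definition norm (x : H) : R := sqrt (Re (inner x x)).

Definition in_ball1 (x : H) : Prop := norm x <= 1.

Inductive in_span (S : H -> Prop) : H -> Prop :=
  | span_zero : in_span S vzero
  | span_gen : forall x, S x -> in_span S x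
  | span_add : forall x y, in_span S x -> in_span S y -> in_span S (vadd x y)
  | span_scal : forall a x, in_span S x -> in_span S (vscal a x).

Definition in_clspan (S : H -> Prop) (v : H) : Prop :=
  forall eps, eps > 0 -> exists w, in_span S w /\ norm (vsub v w) < eps.

Definition separable : Prop :=
  exists d : nat -> H, forall x eps, eps > 0 -> exists n, norm (vsub x (d n)) < eps.

Definition finite_dimensional : Prop :=
  exists l : list H, forall v, in_span (fun x => In x l) v.

Definition orthonormal_basis (e : nat -> H) : Prop :=
  (forall i j, inner (e i) (e j) = if Nat.eqb i j then C1 else C0) /\
  (forall v, in_clspan (fun x => exists n, x = e n) v).

Definition linear_op (T : H -> H) : Prop :=
  (forall x y, T (vadd x y) = vadd (T x) (T y)) /\
  (forall a x, T (vscal a x) = vscal a (T x)).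

Definition in_B1 (T : H -> H) : Prop :=
  linear_op T /\ forall x, norm (T x) <= norm x.

Definition dense_seq_ball1 (hs : nat -> H) : Prop :=
  (forall i, in_ball1 (hs i)) /\
  (forall x eps, in_ball1 x -> eps > 0 -> exists i, norm (vsub x (hs i)) < eps).

(* rho(x,y) = sum_{i>=1} 2^{-i} |<x-y, h_i>|  (h_i = hs (i-1)) *)
Definition rho_terms (hs : nat -> H) (x y : H) (i : nat) : R :=
  (/ 2) ^ (S i) * Cmod (inner (vsub x y) (hs i)).

Definition rho (hs : nat -> H) (x y : H) : R :=
  epsilon (inhabits 0) (fun r => infinite_sum (rho_terms hs x y) r).

Definition UEC (hs : nat -> H) (F : (H -> H) -> Prop) : Prop :=
  forall eps, eps > 0 -> exists delta, delta > 0 /\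
    forall f, F f -> forall x y, in_ball1 x -> in_ball1 y ->
      rho hs x y < delta -> rho hs (f x) (f y) < eps.

End HilbertDefs.

(* Hence a family
     of self-maps of H_1 is UEC as soon as each coordinate <f x - f y, h_i> is
     controlled uniformly in f ([UEC_of_coordinatewise]).
   - Key estimate ([triangular_weak_control]): for fixed g, <T(x-y), g> is small
     uniformly in T when rho(x,y) is small.  Approximate g by w0 in
     span {e_j | j < N} and x-y by lo + hi with lo in span {e_k | k < N+K-1}
     and hi in the high span: <T hi, w0> = 0 by hypothesis, and lo is small
     because its finitely many coordinates are controlled by rho. *)

From Pilot Require Import Defs.
From Stdlib Require Import Reals List ClassicalEpsilon Lra Lia Psatz.
Open Scope R_scope.

Lemma C_ext a b : Re a = Re b -> Im a = Im b -> a = b.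
Proof. destruct a, b; simpl; intros; subst; reflexivity. Qed.

Lemma Cmod_nonneg a : 0 <= Cmod a.
Proof. apply sqrt_pos. Qed.

Lemma Cmod_C0 : Cmod C0 = 0.
Proof. unfold Cmod; simpl. replace (0 * 0 + 0 * 0) with 0 by ring. apply sqrt_0. Qed.

Lemma Cmod_sq a : Cmod a * Cmod a = Re a * Re a + Im a * Im a.
Proof. unfold Cmod. apply sqrt_sqrt. nra. Qed.

Lemma Cmod_triangle a b : Cmod (Cadd a b) <= Cmod a + Cmod b.
Proof.
  pose proof (Cmod_sq a) as Ha. pose proof (Cmod_sq b) as Hb.
  pose proof (Cmod_nonneg a). pose proof (Cmod_nonneg b).
  destruct a as [a1 a2], b as [b1 b2]; simpl in *.
  set (u := Cmod {| Re := a1; Im := a2 |}) in *.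
  set (v := Cmod {| Re := b1; Im := b2 |}) in *.
  clearbody u v.
  assert (Hdot : a1 * b1 + a2 * b2 <= u * v).
  { assert (Hsq : (a1 * b1 + a2 * b2) * (a1 * b1 + a2 * b2) <= (u * v) * (u * v)).
    { replace ((u * v) * (u * v)) with ((u * u) * (v * v)) by ring. rewrite Ha, Hb.
      pose proof (Rle_0_sqr (a1 * b2 - a2 * b1)); unfold Rsqr in *; nra. }
    assert (0 <= u * v) by nra.
    destruct (Rle_lt_dec (a1 * b1 + a2 * b2) (u * v)); [assumption | nra]. }
  unfold Cmod; simpl.
  rewrite <- (sqrt_square (u + v)) by lra.
  apply sqrt_le_1_alt. nra.
Qed.

Lemma Cmod_sub a c : Cmod a <= Cmod (Cadd a c) + Cmod c.
Proof.
  replace a with (Cadd (Cadd a c) (mkC (- Re c) (- Im c))) at 1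
    by (apply C_ext; simpl; ring).
  eapply Rle_trans; [apply Cmod_triangle|].
  replace (Cmod (mkC (- Re c) (- Im c))) with (Cmod c)
    by (unfold Cmod; simpl; f_equal; ring).
  lra.
Qed.

Lemma Re_le_Cmod a : Re a <= Cmod a.
Proof.
  unfold Cmod. eapply Rle_trans; [apply Rle_abs|].
  rewrite <- sqrt_Rsqr_abs. apply sqrt_le_1_alt. unfold Rsqr. nra.
Qed.

Section InnerProduct.
Context {H : Hilbert}.
Implicit Types x y z u : H.

Lemma vadd_0_l x : vadd vzero x = x.
Proof. rewrite vadd_comm. apply vadd_0. Qed.

Lemma vadd_self_zero u : vadd u u = u -> u = vzero.
Proof.
  intro Hu. rewrite <- (vadd_opp _ u). rewrite <- Hu at 2.
  rewrite <- vadd_assoc, vadd_opp, vadd_0. reflexivity.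
Qed.

Lemma vscal_C0 x : vscal C0 x = vzero.
Proof.
  apply vadd_self_zero. rewrite <- vscal_dist_s. f_equal. apply C_ext; simpl; ring.
Qed.

Lemma vscal_zero a : vscal a (@vzero H) = vzero.
Proof. apply vadd_self_zero. rewrite <- vscal_dist_v, vadd_0. reflexivity. Qed.

Lemma opp_unique x y : vadd x y = vzero -> y = vopp x.
Proof.
  intro E. rewrite <- (vadd_0 _ y), <- (vadd_opp _ x).
  rewrite vadd_assoc, (vadd_comm _ y x), E. apply vadd_0_l.
Qed.

(* Negation is scalar multiplication by -1; this lets linear maps commute with it. *)
Lemma vopp_scal x : vopp x = vscal (mkC (-1) 0) x.
Proof.
  symmetry. apply opp_unique. rewrite <- (vscal_1 _ x) at 1.
  rewrite <- vscal_dist_s. replace (Cadd Defs.C1 (mkC (-1) 0)) with C0.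
  - apply vscal_C0.
  - apply C_ext; simpl; ring.
Qed.

Lemma vsub_add x y : vadd y (vsub x y) = x.
Proof.
  unfold vsub. rewrite vadd_assoc, (vadd_comm _ y x), <- vadd_assoc, vadd_opp.
  apply vadd_0.
Qed.

Lemma vadd_swap4 (a b c d : H) : vadd (vadd a b) (vadd c d) = vadd (vadd a c) (vadd b d).
Proof. rewrite <- !vadd_assoc. f_equal. rewrite !vadd_assoc. f_equal. apply vadd_comm. Qed.

Lemma inner_add_r x y z : inner x (vadd y z) = Cadd (inner x y) (inner x z).
Proof.
  rewrite inner_conj, inner_add_l, (inner_conj _ y x), (inner_conj _ z x).
  apply C_ext; simpl; ring.
Qed.

Lemma inner_scal_r a x y : inner x (vscal a y) = Cmul (Cconj a) (inner x y).
Proof.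
  rewrite inner_conj, inner_scal_l, (inner_conj _ y x). apply C_ext; simpl; ring.
Qed.

Lemma inner_zero_l y : inner vzero y = C0.
Proof. rewrite <- (vscal_C0 y), inner_scal_l. apply C_ext; simpl; ring. Qed.

Lemma inner_split_r z a b : inner z b = Cadd (inner z a) (inner z (vsub b a)).
Proof. rewrite <- inner_add_r, vsub_add. reflexivity. Qed.

Lemma inner_im0 x : Im (inner x x) = 0.
Proof. pose proof (inner_conj _ x x) as E. apply (f_equal Im) in E. simpl in E. lra. Qed.

Lemma Re_inner_add x y :
  Re (inner (vadd x y) (vadd x y)) = Re (inner x x) + 2 * Re (inner x y) + Re (inner y y).
Proof. rewrite inner_add_l, !inner_add_r, (inner_conj _ y x). simpl. ring. Qed.

Lemma Re_inner_scal a y :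
  Re (inner (vscal a y) (vscal a y)) = (Re a * Re a + Im a * Im a) * Re (inner y y).
Proof.
  rewrite inner_scal_l, inner_scal_r. pose proof (inner_im0 y).
  destruct (inner y y). simpl in *. subst. ring.
Qed.

Lemma norm_nonneg x : 0 <= norm x.
Proof. apply sqrt_pos. Qed.

Lemma norm_sq x : norm x * norm x = Re (inner x x).
Proof. apply sqrt_sqrt. apply inner_pos. Qed.

Lemma norm_zero : norm (@vzero H) = 0.
Proof. unfold norm. rewrite inner_zero_l. simpl. apply sqrt_0. Qed.

(* Cauchy-Schwarz: the quadratic t |-> ||x - t <x,y> y||^2 is nonnegative. *)
Lemma cauchy_schwarz x y : Cmod (inner x y) <= norm x * norm y.
Proof.
  set (p := Re (inner x x)). set (q := Re (inner y y)).
  assert (Hp : 0 <= p) by apply inner_pos. assert (Hq : 0 <= q) by apply inner_pos.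
  set (ar := Re (inner x y)). set (ai := Im (inner x y)).
  set (A := ar * ar + ai * ai).
  assert (Hquad : forall t, 0 <= p - 2 * t * A + t * t * A * q).
  { intro t. pose proof (inner_pos _ (vadd x (vscal (mkC (- t * ar) (- t * ai)) y))) as P.
    rewrite Re_inner_add, Re_inner_scal, inner_scal_r in P. simpl in P.
    fold p q ar ai in P. unfold A. nra. }
  assert (HA : A <= p * q).
  { destruct (Rle_lt_dec q 0) as [Hq0|Hq0].
    - assert (Eq0 : q = 0) by lra. rewrite Eq0 in Hquad.
      destruct (Rle_lt_dec A 0); [nra|].
      specialize (Hquad ((p + 1) / (2 * A))).
      replace (2 * ((p + 1) / (2 * A)) * A) with (p + 1) in Hquad by (field; lra). lra.
    - specialize (Hquad (/ q)).
      replace (p - 2 * / q * A + / q * / q * A * q) with (p - A / q) in Hquad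
        by (field; lra).
      assert (0 <= q * (p - A / q)) by nra.
      replace (q * (p - A / q)) with (q * p - A) in * by (field; lra). nra. }
  unfold Cmod, norm. rewrite <- sqrt_mult by auto. apply sqrt_le_1_alt. exact HA.
Qed.

Lemma norm_triangle x y : norm (vadd x y) <= norm x + norm y.
Proof.
  unfold norm at 1. rewrite Re_inner_add.
  pose proof (cauchy_schwarz x y). pose proof (Re_le_Cmod (inner x y)).
  pose proof (norm_sq x). pose proof (norm_sq y).
  pose proof (norm_nonneg x). pose proof (norm_nonneg y).
  rewrite <- (sqrt_square (norm x + norm y)) by lra.
  apply sqrt_le_1_alt. nra.
Qed.

Lemma norm_scal a x : norm (vscal a x) = Cmod a * norm x.
Proof.
  unfold norm. rewrite Re_inner_scal. unfold Cmod. apply sqrt_mult; [nra | apply inner_pos].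
Qed.

Lemma norm_opp x : norm (vopp x) = norm x.
Proof.
  rewrite vopp_scal, norm_scal. unfold Cmod; simpl.
  replace (-1 * -1 + 0 * 0) with 1 by ring. rewrite sqrt_1. ring.
Qed.

Lemma ball1_sub x y : in_ball1 x -> in_ball1 y -> norm (vsub x y) <= 2.
Proof.
  unfold in_ball1, vsub. intros. pose proof (norm_triangle x (vopp y)).
  rewrite norm_opp in *. lra.
Qed.

Lemma linear_op_sub (T : H -> H) : linear_op T -> forall x y, T (vsub x y) = vsub (T x) (T y).
Proof. intros [Tadd Tscal] x y. unfold vsub. rewrite Tadd, !vopp_scal, Tscal. reflexivity. Qed.

Lemma B1_ball1 (T : H -> H) x : in_B1 T -> in_ball1 x -> in_ball1 (T x).
Proof. intros [_ Tnorm] Hx. unfold in_ball1 in *. pose proof (Tnorm x). lra. Qed.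

End InnerProduct.

Fixpoint rsum (g : nat -> R) (n : nat) : R :=
  match n with O => 0 | S n => rsum g n + g n end.

Lemma rsum_le g b n : (forall k, (k < n)%nat -> g k <= b) -> rsum g n <= INR n * b.
Proof.
  induction n as [|n IH]; intros Hg; cbn [rsum].
  - simpl INR. lra.
  - rewrite S_INR. assert (rsum g n <= INR n * b) by (apply IH; intros; apply Hg; lia).
    assert (g n <= b) by (apply Hg; lia). lra.
Qed.

Section FiniteSpans.
Context {H : Hilbert}.
Variable e : nat -> H.

Fixpoint vsum (f : nat -> H) (n : nat) : H :=
  match n with O => vzero | S n => vadd (vsum f n) (f n) end.

Lemma vsum_ext f g n : (forall k, (k < n)%nat -> f k = g k) -> vsum f n = vsum g n.
Proof.
  induction n as [|n IH]; intros E; simpl; [reflexivity|].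
  rewrite IH by (intros; apply E; lia). rewrite E by lia. reflexivity.
Qed.

Lemma vsum_add f g n : vsum (fun k => vadd (f k) (g k)) n = vadd (vsum f n) (vsum g n).
Proof.
  induction n as [|n IH]; simpl; [rewrite vadd_0; reflexivity|].
  rewrite IH. apply vadd_swap4.
Qed.

Lemma vsum_scal a f n : vsum (fun k => vscal a (f k)) n = vscal a (vsum f n).
Proof.
  induction n as [|n IH]; simpl; [rewrite vscal_zero; reflexivity|].
  rewrite IH, vscal_dist_v. reflexivity.
Qed.

Lemma norm_vsum f n : norm (vsum f n) <= rsum (fun k => norm (f k)) n.
Proof.
  induction n as [|n IH]; simpl; [rewrite norm_zero; lra|].
  eapply Rle_trans; [apply norm_triangle | lra].
Qed.

Definition allE := fun x : H => exists n, x = e n.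
Definition lowE M := fun x : H => exists j, (j < M)%nat /\ x = e j.
Definition highE M := fun x : H => exists m, (M <= m)%nat /\ x = e m.

Lemma span_mono (S S' : H -> Prop) w :
  (forall x, S x -> S' x) -> in_span S w -> in_span S' w.
Proof.
  intros HS Hw. induction Hw.
  - apply span_zero.
  - apply span_gen. auto.
  - apply span_add; auto.
  - apply span_scal; auto.
Qed.

Lemma span_in_clspan (S : H -> Prop) w : in_span S w -> in_clspan S w.
Proof.
  intros Hw eps Heps. exists w. split; [exact Hw|].
  unfold vsub. rewrite vadd_opp, norm_zero. lra.
Qed.

Lemma span_bound w : in_span allE w -> exists N, in_span (lowE N) w.
Proof.
  intros Hw.
  assert (widen : forall N N' v, (N <= N')%nat -> in_span (lowE N) v -> in_span (lowE N') v).
  { intros N N' v HN. apply span_mono. intros z [j [Hj ->]]. exists j. split; [lia|auto]. }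
  induction Hw as [| x [n ->] | x y _ [N1 H1] _ [N2 H2] | a x _ [N1 H1]].
  - exists O. apply span_zero.
  - exists (S n). apply span_gen. exists n. auto.
  - exists (Nat.max N1 N2).
    apply span_add; [apply (widen N1) | apply (widen N2)]; auto; lia.
  - exists N1. apply span_scal. exact H1.
Qed.

Lemma span_split M w : in_span allE w ->
  exists lo hi, w = vadd lo hi /\ in_span (lowE M) lo /\ in_span (highE M) hi.
Proof.
  intros Hw. induction Hw as [| x [n ->] | x y _ [l1 [h1 [E1 [L1 G1]]]] _ [l2 [h2 [E2 [L2 G2]]]]
                            | a x _ [l1 [h1 [E1 [L1 G1]]]]].
  - exists vzero, vzero. rewrite vadd_0. repeat split; apply span_zero.
  - destruct (Nat.lt_ge_cases n M).
    + exists (e n), vzero. rewrite vadd_0. split; [reflexivity|split].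
      * apply span_gen. exists n. auto.
      * apply span_zero.
    + exists vzero, (e n). rewrite vadd_0_l. split; [reflexivity|split].
      * apply span_zero.
      * apply span_gen. exists n. auto.
  - exists (vadd l1 l2), (vadd h1 h2). subst.
    split; [apply vadd_swap4 | split; apply span_add; auto].
  - exists (vscal a l1), (vscal a h1). subst.
    split; [apply vscal_dist_v | split; apply span_scal; auto].
Qed.

Hypothesis e_orthonormal : forall i j, inner (e i) (e j) = if Nat.eqb i j then Defs.C1 else C0.

Lemma norm_e k : norm (e k) = 1.
Proof. unfold norm. rewrite e_orthonormal, Nat.eqb_refl. simpl. apply sqrt_1. Qed.

Lemma e_ball1 k : in_ball1 (e k).
Proof. unfold in_ball1. rewrite norm_e. lra. Qed.

Lemma high_orth M hi k : in_span (highE M) hi -> (k < M)%nat -> inner hi (e k) = C0.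
Proof.
  intros Hh Hk. induction Hh as [| x [m [Hm ->]] | x y _ IH1 _ IH2 | a x _ IH].
  - apply inner_zero_l.
  - rewrite e_orthonormal. destruct (Nat.eqb_spec m k); [lia|reflexivity].
  - rewrite inner_add_l, IH1, IH2. apply C_ext; simpl; ring.
  - rewrite inner_scal_l, IH. apply C_ext; simpl; ring.
Qed.

Lemma delta_sum j M :
  vsum (fun k => vscal (if Nat.eqb j k then Defs.C1 else C0) (e k)) M
  = if Nat.ltb j M then e j else vzero.
Proof.
  induction M as [|M IH]; simpl; [destruct j; reflexivity|].
  rewrite IH.
  destruct (Nat.eqb_spec j M); destruct (Nat.ltb_spec j M); destruct (Nat.ltb_spec j (S M));
    try lia.
  - subst. rewrite vscal_1, vadd_0_l. reflexivity.
  - rewrite vscal_C0, vadd_0. reflexivity.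
  - rewrite vscal_C0, vadd_0. reflexivity.
Qed.

Lemma low_repr M u :
  in_span (lowE M) u -> u = vsum (fun k => vscal (inner u (e k)) (e k)) M.
Proof.
  intros Hu. induction Hu as [| x [j [Hj ->]] | x y _ IH1 _ IH2 | a x _ IH].
  - symmetry. rewrite (vsum_ext _ (fun _ => vzero)).
    + clear. induction M as [|M IH]; simpl; [reflexivity|]. rewrite IH, vadd_0. reflexivity.
    + intros. rewrite inner_zero_l, vscal_C0. reflexivity.
  - rewrite (vsum_ext _ (fun k => vscal (if Nat.eqb j k then Defs.C1 else C0) (e k))).
    + rewrite delta_sum. destruct (Nat.ltb_spec j M); [reflexivity|lia].
    + intros. rewrite e_orthonormal. reflexivity.
  - rewrite (vsum_ext _ (fun k => vadd (vscal (inner x (e k)) (e k))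
                                        (vscal (inner y (e k)) (e k)))).
    + rewrite vsum_add, <- IH1, <- IH2. reflexivity.
    + intros. rewrite inner_add_l, vscal_dist_s. reflexivity.
  - rewrite (vsum_ext _ (fun k => vscal a (vscal (inner x (e k)) (e k)))).
    + rewrite vsum_scal, <- IH. reflexivity.
    + intros. rewrite inner_scal_l, vscal_mul. reflexivity.
Qed.

Lemma low_norm_bound M u c : in_span (lowE M) u ->
  (forall k, (k < M)%nat -> Cmod (inner u (e k)) <= c) -> norm u <= INR M * c.
Proof.
  intros Hu Hc. rewrite (low_repr M u Hu) at 1.
  eapply Rle_trans; [apply norm_vsum|]. apply rsum_le.
  intros k Hk. rewrite norm_scal, norm_e, Rmult_1_r. auto.
Qed.

Hypothesis e_total : forall v, in_clspan allE v.

Lemma low_high_approx M z eta : eta > 0 ->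
  (forall k, (k < M)%nat -> Cmod (inner z (e k)) < eta) ->
  exists lo hi, norm (vsub z (vadd lo hi)) < eta /\ in_span (lowE M) lo /\
    in_span (highE M) hi /\ norm lo <= INR M * (2 * eta).
Proof.
  intros Heta Hz.
  destruct (e_total z eta Heta) as [w [Hw Hzw]].
  destruct (span_split M w Hw) as [lo [hi [-> [Hlo Hhi]]]].
  exists lo, hi. repeat split; auto.
  apply low_norm_bound; [exact Hlo|]. intros k Hk.
  (* <lo, e_k> = <lo + hi, e_k> differs from <z, e_k> by at most eta *)
  assert (Elo : inner lo (e k) = inner (vadd lo hi) (e k)).
  { rewrite inner_add_l, (high_orth M hi k Hhi Hk). apply C_ext; simpl; ring. }
  rewrite Elo.
  pose proof (Cmod_sub (inner (vadd lo hi) (e k)) (inner (vsub z (vadd lo hi)) (e k))) as Hs.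
  rewrite <- inner_add_l, vsub_add in Hs.
  pose proof (cauchy_schwarz (vsub z (vadd lo hi)) (e k)) as Hcs.
  rewrite norm_e in Hcs. pose proof (Hz k Hk). lra.
Qed.

End FiniteSpans.

Lemma finite_uniform (P : nat -> R -> Prop) :
  (forall i d d', 0 < d' <= d -> P i d -> P i d') ->
  (forall i, exists d, d > 0 /\ P i d) ->
  forall I, exists d, d > 0 /\ forall i, (i < I)%nat -> P i d.
Proof.
  intros Pmono Pex I. induction I as [|I [d [Hd HI]]].
  - exists 1. split; [lra | intros; lia].
  - destruct (Pex I) as [d' [Hd' HI']].
    pose proof (Rmin_l d d'). pose proof (Rmin_r d d').
    assert (Hmin : 0 < Rmin d d') by (apply Rmin_pos; lra).
    exists (Rmin d d'). split; [exact Hmin|].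
    intros i Hi. destruct (Nat.eq_dec i I) as [->|Hne].
    + apply (Pmono I d'); [lra | exact HI'].
    + apply (Pmono i d); [lra | apply HI; lia].
Qed.

Lemma half_pow_pos n : 0 < (/ 2) ^ n.
Proof. apply pow_lt. lra. Qed.

Lemma geom_partial c n : sum_f_R0 (fun i => (/ 2) ^ (S i) * c) n = c * (1 - (/ 2) ^ (S n)).
Proof. induction n as [|n IH]; [simpl; field|]. rewrite tech5, IH. simpl. field. Qed.

Lemma dyadic_partial_sum_bound I : forall (f : nat -> R) a b,
  0 <= a -> 0 <= b ->
  (forall i, (i < I)%nat -> f i <= (/ 2) ^ (S i) * a) ->
  (forall i, f i <= (/ 2) ^ (S i) * b) ->
  forall n, sum_f_R0 f n <= a + b * (/ 2) ^ I.
Proof.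
  induction I as [|I IH]; intros f a b Ha Hb Hlow Hall n.
  - eapply Rle_trans; [apply sum_Rle; intros; apply Hall|].
    rewrite geom_partial. pose proof (half_pow_pos (S n)).
    replace ((/ 2) ^ 0) with 1 by reflexivity. nra.
  - pose proof (Hlow O ltac:(lia)) as H0. simpl in H0.
    pose proof (half_pow_pos I).
    destruct n as [|n]; [simpl; nra|].
    rewrite decomp_sum by lia. simpl pred.
    (* the shifted series, rescaled by 2, satisfies the hypotheses for I *)
    set (g := fun i => 2 * f (S i)).
    assert (Hg : sum_f_R0 g n <= a + b * (/ 2) ^ I).
    { apply IH; auto.
      - intros i Hi. unfold g. pose proof (Hlow (S i) ltac:(lia)). simpl in *. lra.
      - intros i. unfold g. pose proof (Hall (S i)). simpl in *. lra. }
    assert (Eg : sum_f_R0 (fun i => f (S i)) n = / 2 * sum_f_R0 g n).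
    { rewrite scal_sum. apply sum_eq. intros. unfold g. field. }
    rewrite Eg. simpl. nra.
Qed.

Lemma infinite_sum_le f l B : infinite_sum f l -> (forall n, sum_f_R0 f n <= B) -> l <= B.
Proof.
  intros Hl HB. destruct (Rle_lt_dec l B) as [|Hlt]; [assumption|].
  destruct (Hl (l - B)) as [N HN]; [lra|].
  specialize (HN N (le_n N)). specialize (HB N). unfold R_dist in HN.
  pose proof (Rle_abs (l - sum_f_R0 f N)). rewrite Rabs_minus_sym in HN. lra.
Qed.

Section WeakMetric.
Context {H : Hilbert}.
Variable hs : nat -> H.
Hypothesis hs_ball : forall i, in_ball1 (hs i).

Lemma rho_terms_nonneg x y i : 0 <= rho_terms hs x y i.
Proof. apply Rmult_le_pos; [left; apply half_pow_pos | apply Cmod_nonneg]. Qed.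

Lemma rho_terms_le x y i : rho_terms hs x y i <= (/ 2) ^ (S i) * norm (vsub x y).
Proof.
  unfold rho_terms. apply Rmult_le_compat_l; [left; apply half_pow_pos|].
  eapply Rle_trans; [apply cauchy_schwarz|].
  pose proof (hs_ball i). unfold in_ball1 in *.
  pose proof (norm_nonneg (vsub x y)). pose proof (norm_nonneg (hs i)). nra.
Qed.

(* The series defining rho converges, being dominated by a geometric series. *)
Lemma rho_spec x y : infinite_sum (rho_terms hs x y) (rho hs x y).
Proof.
  unfold rho. apply epsilon_spec.
  assert (Hg : Un_growing (sum_f_R0 (rho_terms hs x y))).
  { intro n. simpl. pose proof (rho_terms_nonneg x y (S n)). lra. }
  assert (Hb : has_ub (sum_f_R0 (rho_terms hs x y))).
  { exists (norm (vsub x y)). intros r [n ->].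
    eapply Rle_trans; [apply sum_Rle; intros; apply rho_terms_le|].
    rewrite geom_partial. pose proof (half_pow_pos (S n)).
    pose proof (norm_nonneg (vsub x y)). nra. }
  destruct (growing_cv _ Hg Hb) as [l Hl]. exists l. exact Hl.
Qed.

Lemma rho_term_le x y i : rho_terms hs x y i <= rho hs x y.
Proof.
  apply (Rle_trans _ (sum_f_R0 (rho_terms hs x y) i)).
  - destruct i as [|i]; simpl; [lra|].
    pose proof (cond_pos_sum _ i (rho_terms_nonneg x y)). lra.
  - apply sum_incr; [apply rho_spec | apply rho_terms_nonneg].
Qed.

Lemma rho_le_of_coordinates x y a I : in_ball1 x -> in_ball1 y -> 0 <= a ->
  (forall i, (i < I)%nat -> Cmod (inner (vsub x y) (hs i)) <= a) ->
  rho hs x y <= a + 2 * (/ 2) ^ I.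
Proof.
  intros Hx Hy Ha Hcoord. apply (infinite_sum_le _ _ _ (rho_spec x y)).
  apply dyadic_partial_sum_bound; [lra | lra | |].
  - intros i Hi. unfold rho_terms. apply Rmult_le_compat_l; [left; apply half_pow_pos|].
    auto.
  - intros i. eapply Rle_trans; [apply rho_terms_le|].
    apply Rmult_le_compat_l; [left; apply half_pow_pos | apply ball1_sub; auto].
Qed.

Lemma UEC_of_coordinatewise (F : (H -> H) -> Prop) :
  (forall f, F f -> forall x, in_ball1 x -> in_ball1 (f x)) ->
  (forall i eps, eps > 0 -> exists delta, delta > 0 /\ forall f, F f ->
     forall x y, in_ball1 x -> in_ball1 y -> rho hs x y < delta ->
     Cmod (inner (vsub (f x) (f y)) (hs i)) < eps) ->
  UEC hs F.
Proof.
  intros Fball Fcoord eps Heps.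
  destruct (pow_lt_1_zero (/ 2) ltac:(rewrite Rabs_pos_eq; lra) (eps / 4) ltac:(lra))
    as [I HI].
  specialize (HI I (le_n I)). rewrite Rabs_pos_eq in HI by (left; apply half_pow_pos).
  destruct (finite_uniform
              (fun i d => forall f, F f -> forall x y, in_ball1 x -> in_ball1 y ->
                 rho hs x y < d -> Cmod (inner (vsub (f x) (f y)) (hs i)) < eps / 2))
    with (I := I) as [delta [Hdelta Hall]].
  - intros i d d' Hd' P f Hf x y Hx Hy Hr. apply P; auto. lra.
  - intros i. apply Fcoord. lra.
  - exists delta. split; [exact Hdelta|]. intros f Hf x y Hx Hy Hr.
    apply (Rle_lt_trans _ (eps / 2 + 2 * (/ 2) ^ I)); [|lra].
    apply rho_le_of_coordinates; auto; [lra|].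
    intros i Hi. left. apply Hall; auto.
Qed.

Hypothesis hs_dense :
  forall x eps, in_ball1 x -> eps > 0 -> exists i, norm (vsub x (hs i)) < eps.

(* On the unit ball, rho-closeness controls the coordinate along any g in the
   ball: approximate g by some h_i, whose coordinate weighs 2^-(i+1) in rho. *)
Lemma rho_controls_coordinate g eps : in_ball1 g -> eps > 0 ->
  exists delta, delta > 0 /\ forall x y, in_ball1 x -> in_ball1 y ->
    rho hs x y < delta -> Cmod (inner (vsub x y) g) < eps.
Proof.
  intros Hg Heps. destruct (hs_dense g (eps / 4) Hg) as [i Hi]; [lra|].
  pose proof (half_pow_pos (S i)) as Hpow.
  exists ((/ 2) ^ (S i) * (eps / 2)). split; [nra|].
  intros x y Hx Hy Hr.
  assert (Hnear : Cmod (inner (vsub x y) (hs i)) < eps / 2).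
  { apply (Rmult_lt_reg_l ((/ 2) ^ (S i))); [exact Hpow|].
    pose proof (rho_term_le x y i). unfold rho_terms in *. lra. }
  assert (Hfar : Cmod (inner (vsub x y) (vsub g (hs i))) <= 2 * (eps / 4)).
  { eapply Rle_trans; [apply cauchy_schwarz|].
    pose proof (ball1_sub x y Hx Hy). pose proof (norm_nonneg (vsub g (hs i))).
    pose proof (norm_nonneg (vsub x y)). nra. }
  rewrite (inner_split_r _ (hs i)).
  eapply Rle_lt_trans; [apply Cmod_triangle | lra].
Qed.

End WeakMetric.

Section TriangularFamily.
Context {H : Hilbert}.
Variables (Tset : (H -> H) -> Prop) (e : nat -> H) (K : nat) (hs : nat -> H).
Hypothesis Tset_B1 : forall T, Tset T -> in_B1 T.
Hypothesis e_orthonormal :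
  forall i j, inner (e i) (e j) = if Nat.eqb i j then Defs.C1 else C0.
Hypothesis e_total : forall v, in_clspan (allE e) v.
Hypothesis Tset_triangular : forall (N : nat), (1 <= N)%nat ->
  forall T, Tset T ->
  forall h, in_clspan (highE e (N + K - 1)) h ->
  forall v, in_span (lowE e N) v ->
  inner (T h) v = C0.
Hypothesis hs_ball : forall i, in_ball1 (hs i).
Hypothesis hs_dense :
  forall x eps, in_ball1 x -> eps > 0 -> exists i, norm (vsub x (hs i)) < eps.

Lemma rho_controls_basis_coordinates M eta : eta > 0 -> exists delta, delta > 0 /\
  forall x y, in_ball1 x -> in_ball1 y -> rho hs x y < delta ->
  forall k, (k < M)%nat -> Cmod (inner (vsub x y) (e k)) < eta.
Proof.
  intros Heta.
  destruct (finite_uniform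
              (fun k d => forall x y, in_ball1 x -> in_ball1 y -> rho hs x y < d ->
                 Cmod (inner (vsub x y) (e k)) < eta))
    with (I := M) as [delta [Hdelta Hall]].
  - intros k d d' Hd' P x y Hx Hy Hr. apply P; auto. lra.
  - intros k. apply (rho_controls_coordinate hs hs_ball hs_dense); auto.
    apply e_ball1. exact e_orthonormal.
  - exists delta. split; [exact Hdelta|]. intros x y Hx Hy Hr k Hk. apply Hall; auto.
Qed.

Lemma triangular_weak_control g eps : eps > 0 -> exists delta, delta > 0 /\
  forall T, Tset T -> forall x y, in_ball1 x -> in_ball1 y -> rho hs x y < delta ->
    Cmod (inner (T (vsub x y)) g) < eps.
Proof.
  intros Heps.
  destruct (e_total g (eps / 8)) as [w0 [Hw0 Hgw0]]; [lra|].
  destruct (span_bound e w0 Hw0) as [N0 HN0].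
  set (N := S N0).
  assert (Hw0_low : in_span (lowE e N) w0).
  { eapply span_mono; [|exact HN0]. intros z [j [Hj ->]]. exists j. split; [unfold N; lia|auto]. }
  set (M := (N + K - 1)%nat). set (V := norm w0).
  assert (HV : 0 <= V) by apply norm_nonneg. assert (HM : 0 <= INR M) by apply pos_INR.
  set (eta := eps / (16 * (V + 1) * (INR M + 1))).
  assert (Heta : eta > 0) by (unfold eta; apply Rdiv_lt_0_compat; nra).
  assert (Heta_eq : eta * ((V + 1) * (INR M + 1)) = eps / 16) by (unfold eta; field; lra).
  destruct (rho_controls_basis_coordinates M eta Heta) as [delta [Hdelta Hcoord]].
  exists delta. split; [exact Hdelta|]. intros T HT x y Hx Hy Hr.
  set (z := vsub x y). destruct (Tset_B1 T HT) as [[Tadd _] Tnorm].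
  destruct (low_high_approx e e_orthonormal e_total M z eta Heta)
    as [lo [hi [Hzw [Hlo [Hhi Hlo_norm]]]]].
  { intros k Hk. apply Hcoord; auto. }
  assert (ETz : T z = vadd (vadd (T lo) (T hi)) (T (vsub z (vadd lo hi)))).
  { rewrite <- !Tadd, vsub_add. reflexivity. }
  assert (Horth : inner (T hi) w0 = C0).
  { apply (Tset_triangular N ltac:(unfold N; lia) T HT hi); [|exact Hw0_low].
    apply span_in_clspan. exact Hhi. }
  (* <T z, g> = <T lo, w0> + <T hi, w0> + <T (z - lo - hi), w0> + <T z, g - w0>,
     where the second term vanishes and the others are bounded by Cauchy-Schwarz *)
  assert (B_lo : Cmod (inner (T lo) w0) <= INR M * (2 * eta) * V).
  { eapply Rle_trans; [apply cauchy_schwarz|]. pose proof (Tnorm lo).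
    pose proof (norm_nonneg (T lo)). fold V. nra. }
  assert (B_err : Cmod (inner (T (vsub z (vadd lo hi))) w0) <= eta * V).
  { eapply Rle_trans; [apply cauchy_schwarz|]. pose proof (Tnorm (vsub z (vadd lo hi))).
    pose proof (norm_nonneg (T (vsub z (vadd lo hi)))). fold V. nra. }
  assert (B_g : Cmod (inner (T z) (vsub g w0)) <= 2 * (eps / 8)).
  { eapply Rle_trans; [apply cauchy_schwarz|]. pose proof (Tnorm z).
    pose proof (ball1_sub x y Hx Hy) as Hz. fold z in Hz.
    pose proof (norm_nonneg (T z)). pose proof (norm_nonneg (vsub g w0)). nra. }
  assert (B_w0 : Cmod (inner (T z) w0) <= INR M * (2 * eta) * V + eta * V).
  { rewrite ETz, !inner_add_l, Horth.
    eapply Rle_trans; [apply Cmod_triangle|].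
    eapply Rle_trans; [apply Rplus_le_compat_r, Cmod_triangle|].
    rewrite Cmod_C0. lra. }
  rewrite (inner_split_r _ w0).
  eapply Rle_lt_trans; [apply Cmod_triangle|]. nra.
Qed.

End TriangularFamily.

Theorem mainTheorem6 (H : Hilbert) (Tset : (H -> H) -> Prop) :
  separable (H := H) ->
  ~ finite_dimensional (H := H) ->
  (forall T, Tset T -> in_B1 T) ->
  (exists (e : nat -> H) (K : nat),
     orthonormal_basis e /\
     forall (N : nat), (1 <= N)%nat ->
     forall T, Tset T ->
     forall h, in_clspan (fun x => exists m, (N + K - 1 <= m)%nat /\ x = e m) h ->
     forall v, in_span (fun x => exists j, (j < N)%nat /\ x = e j) v ->
     inner (T h) v = C0) ->
  forall hs : nat -> H, dense_seq_ball1 hs ->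
    (forall T, Tset T -> forall x, in_ball1 x -> in_ball1 (T x)) /\
    UEC hs Tset.
Proof.
  intros _ _ Tset_B1 [e [K [[e_orthonormal e_total] Tset_triangular]]] hs [hs_ball hs_dense].
  assert (Tset_ball : forall T, Tset T -> forall x, in_ball1 x -> in_ball1 (T x)).
  { intros T HT x Hx. apply B1_ball1; auto. }
  split; [exact Tset_ball|].
  apply (UEC_of_coordinatewise hs hs_ball); [exact Tset_ball|].
  intros i eps Heps.
  destruct (triangular_weak_control Tset e K hs Tset_B1 e_orthonormal e_total
              Tset_triangular hs_ball hs_dense (hs i) eps Heps) as [delta [Hdelta Hctl]].
  exists delta. split; [exact Hdelta|]. intros T HT x y Hx Hy Hr.
  destruct (Tset_B1 T HT) as [Tlin _].
  rewrite <- linear_op_sub by exact Tlin. apply Hctl; auto.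
Qed.
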